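(* Assume $CA_2$. Then there is a coloring $o:[\omega_1]^2\to\omega$ such that for every uncountable family $\mathcal A\subseteq[\omega_1]^{<\omega}$ of pairwise disjoint sets and every $n\in\omega$ there are $a,b\in\mathcal A$ with $a<b$ such that $o(\alpha,\beta)=n$ for all $\alpha\in a$ and $\beta\in b$.
   Context: For finite sets of ordinals, $a<b$ means every element of $a$ is below every element of $b$. A type is a sequence $\tau=\{(m_k,n_{k+1},r_{k+1})\}_{k\in\omega}$ of natural numbers with $m_0=1$; $n_k\ge2$ for $k\ge1$; every $r\in\omega$ equals $r_k$ for infinitely many $k$; $m_k>r_{k+1}$; and $m_{k+1}=r_{k+1}+(m_k-r_{k+1})n_{k+1}$ for all $k$. For a set of ordinals $X$ and $\mathcal F\subseteq[X]^{<\omega}$, $\mathcal F_k$ is the set of elements of rank $k$ in $(\mathcal F,\subsetneq)$; $A\sqsubseteq B$ means $A\subseteq B$ and every element of $B$ below an element of $A$ is in $A$. $\mathcal F$ is a construction scheme over $X$ of type $\tau$ if (1) every finite subset of $X$ lies in a member of $\mathcal F$; (2) $|F|=m_k$ for $F\in\mathcal F_k$; (3) $E\cap F\sqsubseteq E,F$ for $E,F\in\mathcal F_k$; (4) each $F\in\mathcal F_{k+1}$ is the union of uniquely determined $F_0,\dots,F_{n_{k+1}-1}\in\mathcal F_k$ forming a $\Delta$-system with root $R(F)$, $|R(F)|=r_{k+1}$, $R(F)<F_0\setminus R(F)<\dots<F_{n_{k+1}-1}\setminus R(F)$. For a construction scheme $\mathcal F$ over $\omega_1$, $l\ge1$, $F\in\mathcal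 F_l$ and finite $\mathcal C\subseteq[\omega_1]^{<\omega}$: $F$ captures $\mathcal C$ if $|\mathcal C|\le n_l$ and $\mathcal C$ can be enumerated as $\{c_i\}_{i<|\mathcal C|}$ with $c_i\subseteq F_i$, $c_i\setminus R(F)\neq\emptyset$ and $\phi_i[c_0]=c_i$ where $\phi_i:F_0\to F_i$ is the increasing bijection. $\mathcal F$ is $n$-capturing if for every uncountable $S\subseteq[\omega_1]^{<\omega}$ and every $k\in\omega$ there are $\mathcal C\in[S]^n$, $l>k$ and $F\in\mathcal F_l$ capturing $\mathcal C$. $CA_n$ is the statement: for every type $\tau$ with $n\le n_k$ for all $k\ge1$ there is an $n$-capturing construction scheme over $\omega_1$ of type $\tau$. *)

(* Sets are predicates W -> Prop; families are (W -> Prop) -> Prop.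
   omega_1 is represented by an abstract strict well-order (W, lt) that is
   uncountable and all of whose proper initial segments are countable. *)
From Stdlib Require Import List Arith.
Import ListNotations.
Set Implicit Arguments.

Section Defs.
Variable W : Type.
Variable lt : W -> W -> Prop.

Definition is_omega1 : Prop :=
  (forall x, ~ lt x x) /\
  (forall x y z, lt x y -> lt y z -> lt x z) /\
  (forall x y, x = y \/ lt x y \/ lt y x) /\
  well_founded lt /\
  ~ (exists f : W -> nat, forall x y, f x = f y -> x = y) /\
  (forall a, exists f : W -> nat, forall x y, lt x a -> lt y a -> f x = f y -> x = y).

Definition subset (A B : W -> Prop) := forall x, A x -> B x.
Definition seteq (A B : W -> Prop) := forall x, A x <-> B x.
Definition psubset (A B : W -> Prop) := subset A B /\ exists x, B x /\ ~ A x.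
Definition inter (A B : W -> Prop) : W -> Prop := fun x => A x /\ B x.
Definition diff (A B : W -> Prop) : W -> Prop := fun x => A x /\ ~ B x.

Definition finite (A : W -> Prop) := exists l : list W, forall x, A x <-> In x l.
Definition card_eq (A : W -> Prop) (p : nat) :=
  exists l : list W, NoDup l /\ length l = p /\ forall x, A x <-> In x l.

Definition set_lt (a b : W -> Prop) := forall x y, a x -> b y -> lt x y.
Definition init_seg (A B : W -> Prop) :=
  subset A B /\ forall x y, B x -> A y -> lt x y -> A x.

Definition countable_fam (S : (W -> Prop) -> Prop) :=
  exists f : (W -> Prop) -> nat, forall A B, S A -> S B -> f A = f B -> A = B.

Definition fam_enum (C : (W -> Prop) -> Prop) (N : nat) (c : nat -> W -> Prop) :=
  (forall i j, i < N -> j < N -> c i = c j -> i = j) /\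
  (forall i, i < N -> C (c i)) /\
  (forall A, C A -> exists i, i < N /\ A = c i).
Definition fam_card (C : (W -> Prop) -> Prop) (N : nat) := exists c, fam_enum C N c.

Definition rank_ge (F : (W -> Prop) -> Prop) (A : W -> Prop) (k : nat) :=
  exists c : nat -> W -> Prop,
    (forall i, i < k -> F (c i)) /\
    (forall i, i + 1 < k -> psubset (c i) (c (i + 1))) /\
    (0 < k -> psubset (c (k - 1)) A).
Definition level (F : (W -> Prop) -> Prop) (k : nat) (A : W -> Prop) :=
  F A /\ rank_ge F A k /\ ~ rank_ge F A (k + 1).

(* a type tau = {(m_k, n_{k+1}, r_{k+1})}_k, encoded by three sequences
   m, n, r : nat -> nat (the values n 0 and r 0 are irrelevant). *)
Definition is_type (m n r : nat -> nat) :=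
  m 0 = 1 /\
  (forall k, 1 <= k -> 2 <= n k) /\
  (forall j N, exists k, N < k /\ r k = j) /\
  (forall k, r (k + 1) < m k) /\
  (forall k, m (k + 1) = r (k + 1) + (m k - r (k + 1)) * n (k + 1)).

Definition is_decomp (m n r : nat -> nat) (F : (W -> Prop) -> Prop) (k : nat)
    (Fa : W -> Prop) (G : nat -> W -> Prop) (R : W -> Prop) :=
  (forall i, i < n (k + 1) -> level F k (G i)) /\
  seteq Fa (fun x => exists i, i < n (k + 1) /\ G i x) /\
  (forall i j, i < n (k + 1) -> j < n (k + 1) -> i <> j -> seteq (inter (G i) (G j)) R) /\
  card_eq R (r (k + 1)) /\
  set_lt R (diff (G 0) R) /\
  (forall i, i + 1 < n (k + 1) -> set_lt (diff (G i) R) (diff (G (i + 1)) R)).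

Definition construction_scheme (m n r : nat -> nat) (F : (W -> Prop) -> Prop) :=
  (forall A, F A -> finite A) /\
  (forall A, finite A -> exists B, F B /\ subset A B) /\
  (forall k A, level F k A -> card_eq A (m k)) /\
  (forall k E G, level F k E -> level F k G ->
      init_seg (inter E G) E /\ init_seg (inter E G) G) /\
  (forall k Fa, level F (k + 1) Fa ->
     exists G R, is_decomp m n r F k Fa G R /\
       forall G' R', is_decomp m n r F k Fa G' R' ->
         forall i, i < n (k + 1) -> seteq (G i) (G' i)).

(* same_pos A B x y : y is the image of x under the increasing bijection A -> B *)
Definition same_pos (A B : W -> Prop) (x y : W) :=
  A x /\ B y /\ exists p, card_eq (fun z => A z /\ lt z x) p /\
                          card_eq (fun z => B z /\ lt z y) p.

Definition captures (m n r : nat -> nat) (F : (W -> Prop) -> Prop) (l : nat)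
    (Fa : W -> Prop) (C : (W -> Prop) -> Prop) :=
  1 <= l /\ level F l Fa /\
  exists G R, is_decomp m n r F (l - 1) Fa G R /\
  exists N c, fam_enum C N c /\ N <= n l /\
    forall i, i < N ->
      subset (c i) (G i) /\
      (exists x, c i x /\ ~ R x) /\
      seteq (c i) (fun y => exists x, c 0 x /\ same_pos (G 0) (G i) x y).

Definition n_capturing (k0 : nat) (m n r : nat -> nat) (F : (W -> Prop) -> Prop) :=
  forall S : (W -> Prop) -> Prop,
    (forall A, S A -> finite A) -> ~ countable_fam S ->
    forall k, exists C l Fa,
      (forall A, C A -> S A) /\ fam_card C k0 /\ k < l /\ level F l Fa /\
      captures m n r F l Fa C.

Definition CA (k0 : nat) :=
  forall m n r, is_type m n r -> (forall k, 1 <= k -> k0 <= n k) ->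
    exists F, construction_scheme m n r F /\ n_capturing k0 m n r F.

End Defs.

(* The colouring counts copies.  Use the type with [n_k = 2] for all [k].  If [a < b] lie
   outside the root of the two halves [G 0], [G 1] of a member of the scheme, with [a] in
   [G 0] and [b] in [G 1], the copy of [b] is its image under the increasing bijection
   [G 1 -> G 0]; coherence of the scheme makes it unique.  The colour of [(a, b)] is the
   number of times [b] can be replaced by its copy while staying above [a].
   Given an uncountable disjoint family, 2-capturing applied to the unions [x ∪ y] of pairs
   [x < y] of colour [n] yields two such pairs [(x0, y0)], [(x1, y1)] in the two halves of a
   member of the scheme, [x1 ∪ y1] being the copy of [x0 ∪ y0].  Every point of [y1] has its
   copy in [y0], above [x0], so [(x0, y1)] has colour [n + 1]; every point of [x1] has its copy
   in [x0], below [y0], so [(y0, x1)] has colour [0]. *)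

From Stdlib Require Import List Arith Lia Classical ClassicalEpsilon Cantor.

Set Implicit Arguments.

Definition two (k : nat) : nat := 2.

Section FiniteSets.

Variable W : Type.

Definition union (A B : W -> Prop) : W -> Prop := fun x => A x \/ B x.

Lemma card_eq_ext (A B : W -> Prop) p : seteq A B -> card_eq A p -> card_eq B p.
Proof.
  intros E [l [Hl [Hlen HA]]]. exists l. split; [exact Hl|]. split; [exact Hlen|].
  intro x. rewrite <- (E x). apply HA.
Qed.

Lemma finite_card_eq (A : W -> Prop) : finite A -> exists p, card_eq A p.
Proof.
  intros [l HA]. set (dec := fun x y : W => excluded_middle_informative (x = y)).
  exists (length (nodup dec l)), (nodup dec l). split; [apply NoDup_nodup|]. split; [reflexivity|].
  intro x. rewrite nodup_In. apply HA.
Qed.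

Lemma finite_restrict (A P : W -> Prop) : finite A -> finite (fun z => A z /\ P z).
Proof.
  intros [l HA]. exists (filter (fun z => if excluded_middle_informative (P z) then true else false) l).
  intro x. rewrite filter_In, <- HA.
  destruct (excluded_middle_informative (P x)); intuition discriminate.
Qed.

Lemma finite_union (A B : W -> Prop) : finite A -> finite B -> finite (union A B).
Proof.
  intros [la HA] [lb HB]. exists (la ++ lb). intro x. unfold union. rewrite in_app_iff, <- HA, <- HB. tauto.
Qed.

Lemma card_eq_restrict (A : W -> Prop) p (P : W -> Prop) :
  card_eq A p -> exists q, card_eq (fun z => A z /\ P z) q.
Proof.
  intros [l [_ [_ HA]]]. apply finite_card_eq, finite_restrict. exists l. exact HA.
Qed.

Definition card_of (A : W -> Prop) : nat := epsilon (inhabits 0) (card_eq A).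

Lemma card_of_spec (A : W -> Prop) : finite A -> card_eq A (card_of A).
Proof. intro HA. unfold card_of. apply epsilon_spec, finite_card_eq, HA. Qed.

Lemma card_le_rel (A B : W -> Prop) (R : W -> W -> Prop) p q :
  card_eq A p -> card_eq B q ->
  (forall a, A a -> exists b, B b /\ R a b) ->
  (forall a a' b, A a -> A a' -> R a b -> R a' b -> a = a') -> p <= q.
Proof.
  intros [la [Hla [<- HA]]] [lb [Hlb [<- HB]]] Himg Hinj.
  set (f := fun a => epsilon (inhabits a) (fun b => B b /\ R a b)).
  assert (Hf : forall a, A a -> B (f a) /\ R a (f a)).
  { intros a Ha. apply epsilon_spec, Himg, Ha. }
  rewrite <- (length_map f). apply NoDup_incl_length.
  - apply NoDup_map_NoDup_ForallPairs; [|exact Hla].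
    intros a a' Ha Ha' E. apply HA in Ha. apply HA in Ha'.
    apply (Hinj a a' (f a)); [exact Ha | exact Ha' | apply Hf, Ha | rewrite E; apply Hf, Ha'].
  - intros b Hb. apply in_map_iff in Hb. destruct Hb as [a [<- Ha]]. apply HB, Hf, HA, Ha.
Qed.

Lemma card_le (A B : W -> Prop) p q : card_eq A p -> card_eq B q -> subset A B -> p <= q.
Proof.
  intros HA HB Hsub. apply (card_le_rel (fun a b => a = b) HA HB); [|congruence].
  intros a Ha. exists a. split; [apply Hsub, Ha | reflexivity].
Qed.

Lemma card_eq_unique (A : W -> Prop) p q : card_eq A p -> card_eq A q -> p = q.
Proof.
  intros Hp Hq. apply Nat.le_antisymm; [apply (card_le Hp Hq) | apply (card_le Hq Hp)]; intros x Hx; exact Hx.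
Qed.

Lemma card_lt (A B : W -> Prop) p q :
  card_eq A p -> card_eq B q -> subset A B -> (exists z, B z /\ ~ A z) -> p < q.
Proof.
  intros [l [Hl [Hlen HA]]] HB Hsub [z [Bz Az]].
  assert (Hz : card_eq (union A (fun x => x = z)) (S p)).
  { exists (z :: l). split; [constructor; [rewrite <- HA; exact Az | exact Hl]|].
    split; [simpl; congruence|]. intro x. unfold union. simpl. rewrite <- HA. intuition. }
  apply (card_le Hz HB). intros x [Hx| ->]; [apply Hsub, Hx | exact Bz].
Qed.

End FiniteSets.

Section Countability.

Variable W : Type.

Lemma countable_fam_mono {S T : (W -> Prop) -> Prop} :
  countable_fam S -> (forall a, T a -> S a) -> countable_fam T.
Proof. intros [f Hf] HTS. exists f. intros A B HA HB. apply Hf; auto. Qed.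

Lemma countable_fam_fibers (S : (W -> Prop) -> Prop) (kappa : (W -> Prop) -> nat) :
  (forall j, countable_fam (fun a => S a /\ kappa a = j)) -> countable_fam S.
Proof.
  intro Hfib.
  set (code := fun j => epsilon (inhabits (fun _ : W -> Prop => 0))
    (fun f => forall A B, S A /\ kappa A = j -> S B /\ kappa B = j -> f A = f B -> A = B)).
  exists (fun a => to_nat (kappa a, code (kappa a) a)).
  intros A B HA HB E. apply (f_equal of_nat) in E. rewrite !cancel_of_to in E.
  injection E as Ek Ec. rewrite <- Ek in Ec.
  apply (epsilon_spec _ _ (Hfib (kappa A))) in Ec; auto.
Qed.

Lemma uncountable_fiber (S : (W -> Prop) -> Prop) (kappa : (W -> Prop) -> nat) :
  ~ countable_fam S -> exists j, ~ countable_fam (fun a => S a /\ kappa a = j).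
Proof.
  intro HS. apply NNPP. intro Hall. apply HS, (countable_fam_fibers S kappa).
  intro j. apply NNPP. intro Hj. apply Hall. exists j. exact Hj.
Qed.

Lemma countable_fam_split (S Q : (W -> Prop) -> Prop) :
  countable_fam (fun a => S a /\ Q a) -> countable_fam (fun a => S a /\ ~ Q a) -> countable_fam S.
Proof.
  intros HQ HnQ. apply (countable_fam_fibers S (fun a => if excluded_middle_informative (Q a) then 0 else 1)).
  intros [|j]; [apply (countable_fam_mono HQ) | apply (countable_fam_mono HnQ)];
    intros a [Sa E]; destruct (excluded_middle_informative (Q a)); easy.
Qed.

Lemma countable_fam_inj_image (X : (W -> Prop) -> Prop) (h : (W -> Prop) -> W -> Prop) :
  (forall x x', X x -> X x' -> h x = h x' -> x = x') ->
  countable_fam (fun c => exists x, X x /\ c = h x) -> countable_fam X.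
Proof.
  intros Hinj [f Hf]. exists (fun x => f (h x)). intros x x' Hx Hx' E.
  apply Hinj; [exact Hx | exact Hx' |]. apply Hf; eauto.
Qed.

End Countability.

Section LinearOrder.

Variables (W : Type) (lt : W -> W -> Prop).

Definition strict_total_order : Prop :=
  (forall x, ~ lt x x) /\ (forall x y z, lt x y -> lt y z -> lt x z) /\
  (forall x y, x = y \/ lt x y \/ lt y x).

Definition pairwise_disjoint (A : (W -> Prop) -> Prop) : Prop :=
  forall a b, A a -> A b -> a <> b -> forall x, ~ (a x /\ b x).

Definition disjoint_nonempty_finite (A : (W -> Prop) -> Prop) : Prop :=
  (forall a, A a -> finite a) /\ pairwise_disjoint A /\ (forall a, A a -> exists x, a x).

Lemma disjoint_nonempty_finite_sub {A A' : (W -> Prop) -> Prop} :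
  disjoint_nonempty_finite A -> (forall a, A' a -> A a) -> disjoint_nonempty_finite A'.
Proof.
  intros [Hfin [Hdisj Hne]] Hsub. split; [|split].
  - intros a Ha. apply Hfin, Hsub, Ha.
  - intros a b Ha Hb. apply Hdisj; apply Hsub; assumption.
  - intros a Ha. apply Hne, Hsub, Ha.
Qed.

Definition pairs_dense (A : (W -> Prop) -> Prop) (P : (W -> Prop) -> (W -> Prop) -> Prop) : Prop :=
  forall A', (forall a, A' a -> A a) -> ~ countable_fam A' ->
    exists x y, A' x /\ A' y /\ set_lt lt x y /\ P x y.

Definition pos_image (G0 G1 c : W -> Prop) : W -> Prop :=
  fun y => exists x, c x /\ same_pos lt G0 G1 x y.

Lemma scheme_init_seg_inter m n r F : construction_scheme lt m n r F ->
  forall d k E E', level F k E -> level F (k + d) E' -> init_seg lt (inter E E') E.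
Proof.
  intros [_ [_ [_ [Hcoh Hdec]]]]. induction d as [|d IH]; intros k E E' HE HE'.
  - rewrite Nat.add_0_r in HE'. apply (Hcoh k E E' HE HE').
  - replace (k + S d) with (k + d + 1) in HE' by lia.
    destruct (Hdec _ _ HE') as [G [R [[Hlev [Hunion _]] _]]].
    split; [intros x [Ex _]; exact Ex|].
    intros x y Ex [Ey E'y] Hxy. apply Hunion in E'y. destruct E'y as [i [Hi Gy]].
    destruct (IH k E (G i) HE (Hlev i Hi)) as [_ Hinit].
    destruct (Hinit x y Ex (conj Ey Gy) Hxy) as [_ Gx].
    split; [exact Ex|]. apply Hunion. exists i. split; assumption.
Qed.

Lemma capture_pair m n r F S : n_capturing lt 2 m n r F ->
  (forall a, S a -> finite a) -> ~ countable_fam S ->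
  exists c0 c1 k Fa G R, S c0 /\ S c1 /\ c0 <> c1 /\
    level F (k + 1) Fa /\ is_decomp lt m n r F k Fa G R /\ subset c0 (G 0) /\
    (exists x, c0 x /\ ~ R x) /\ seteq c1 (pos_image (G 0) (G 1) c0).
Proof.
  intros Hcap Hfin Hunc.
  destruct (Hcap S Hfin Hunc 0) as [C [l [Fa [HCS [[d [dinj [dC _]]] [_ [_ Hcapt]]]]]]].
  destruct Hcapt as [Hl [HFa [G [R [HD [N [c [[cinj [cC csurj]] [_ Hc]]]]]]]]].
  destruct (csurj _ (dC 0 ltac:(lia))) as [i0 [Hi0 E0]].
  destruct (csurj _ (dC 1 ltac:(lia))) as [i1 [Hi1 E1]].
  assert (i0 <> i1).
  { intros ->. enough (0 = 1) by discriminate. apply dinj; [lia | lia | congruence]. }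
  assert (HN : 1 < N) by lia.
  destruct (Hc 0 ltac:(lia)) as [Hsub0 [Hout0 _]]. destruct (Hc 1 HN) as [_ [_ Himg]].
  exists (c 0), (c 1), (l - 1), Fa, G, R.
  replace (l - 1 + 1) with l by lia.
  split; [apply HCS, cC; lia|]. split; [apply HCS, cC, HN|].
  split; [intro E; enough (0 = 1) by discriminate; apply cinj; [lia | exact HN | exact E]|].
  repeat (split; [assumption|]). exact Himg.
Qed.

Hypothesis Hlt : strict_total_order.

Lemma ord_irrefl x : ~ lt x x.
Proof. apply Hlt. Qed.

Lemma ord_trans {x y z} : lt x y -> lt y z -> lt x z.
Proof. apply Hlt. Qed.

Lemma ord_total x y : x = y \/ lt x y \/ lt y x.
Proof. apply Hlt. Qed.

Lemma ord_asym {x y} : lt x y -> ~ lt y x.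
Proof. intros Hxy Hyx. exact (ord_irrefl (ord_trans Hxy Hyx)). Qed.

Lemma rank_lt {A : W -> Prop} {x y p q} : A x -> lt x y ->
  card_eq (fun z => A z /\ lt z x) p -> card_eq (fun z => A z /\ lt z y) q -> p < q.
Proof.
  intros Ax Hxy Hp Hq. apply (card_lt Hp Hq).
  - intros z [Az Hzx]. split; [exact Az | exact (ord_trans Hzx Hxy)].
  - exists x. split; [split; assumption | intros [_ Hxx]; exact (ord_irrefl Hxx)].
Qed.

Lemma rank_inj {A : W -> Prop} {x y p} : A x -> A y ->
  card_eq (fun z => A z /\ lt z x) p -> card_eq (fun z => A z /\ lt z y) p -> x = y.
Proof.
  intros Ax Ay Hx Hy. destruct (ord_total x y) as [E|[Hxy|Hyx]]; [exact E | |].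
  - pose proof (rank_lt Ax Hxy Hx Hy). lia.
  - pose proof (rank_lt Ay Hyx Hy Hx). lia.
Qed.

Lemma same_pos_func {G0 G1 : W -> Prop} {x y y'} :
  same_pos lt G0 G1 x y -> same_pos lt G0 G1 x y' -> y = y'.
Proof.
  intros [_ [Gy [p [Hx Hy]]]] [_ [Gy' [p' [Hx' Hy']]]].
  rewrite (card_eq_unique Hx Hx') in Hy. exact (rank_inj Gy Gy' Hy Hy').
Qed.

Lemma same_pos_inj {G0 G1 : W -> Prop} {x x' y} :
  same_pos lt G0 G1 x y -> same_pos lt G0 G1 x' y -> x = x'.
Proof.
  intros [Gx [_ [p [Hx Hy]]]] [Gx' [_ [p' [Hx' Hy']]]].
  rewrite (card_eq_unique Hy Hy') in Hx. exact (rank_inj Gx Gx' Hx Hx').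
Qed.

Lemma same_pos_reflect_lt {G0 G1 : W -> Prop} {x y x' y'} :
  same_pos lt G0 G1 x y -> same_pos lt G0 G1 x' y' -> lt y y' -> lt x x'.
Proof.
  intros [Gx [Gy [p [Hx Hy]]]] [Gx' [_ [p' [Hx' Hy']]]] Hyy'.
  pose proof (rank_lt Gy Hyy' Hy Hy').
  destruct (ord_total x x') as [<-|[Hxx'|Hx'x]]; [|exact Hxx'|].
  - rewrite (card_eq_unique Hx Hx') in *. lia.
  - pose proof (rank_lt Gx' Hx'x Hx' Hx). lia.
Qed.

Lemma init_seg_card_incl (A B Y1 Y2 : W -> Prop) p :
  card_eq A p -> card_eq B p -> init_seg lt A Y1 -> init_seg lt B Y2 ->
  subset A Y2 -> subset B Y1 -> subset A B.
Proof.
  intros HA HB [_ HAinit] [_ HBinit] HAY2 HBY1 x Ax. apply NNPP. intro Bx.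
  enough (p < p) by lia.
  apply (card_lt HB HA); [|exists x; split; assumption].
  intros y By. destruct (ord_total x y) as [<-|[Hxy|Hyx]].
  - contradiction.
  - exfalso. exact (Bx (HBinit x y (HAY2 x Ax) By Hxy)).
  - exact (HAinit y x (HBY1 y By) Ax Hyx).
Qed.

Lemma card_le_preimages (G0 G1 D0 D1 : W -> Prop) p q :
  card_eq D1 p -> card_eq D0 q ->
  (forall u, D1 u -> exists x, D0 x /\ same_pos lt G0 G1 x u) -> p <= q.
Proof.
  intros H1 H0 Hpre. apply (card_le_rel (fun u x => same_pos lt G0 G1 x u) H1 H0 Hpre).
  intros u u' x _ _. apply same_pos_func.
Qed.

Lemma pos_image_lower (G0 G1 x0 y0 x1 y1 : W -> Prop) p :
  seteq (union x1 y1) (pos_image G0 G1 (union x0 y0)) ->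
  set_lt lt x0 y0 -> set_lt lt x1 y1 -> card_eq x0 p -> card_eq x1 p ->
  forall z w, x0 z -> same_pos lt G0 G1 z w -> x1 w.
Proof.
  intros Himg L0 L1 K0 K1 z w Hz Hzw.
  assert (Hw : union x1 y1 w) by (apply Himg; exists z; split; [left|]; assumption).
  destruct Hw as [|Hw]; [assumption|exfalso].
  (* Then the [p] points of [x1], all below [w], have preimages in [x0] below [z]: too few. *)
  destruct (card_eq_restrict (fun v => lt v z) K0) as [p' K'].
  assert (p' < p).
  { apply (card_lt K' K0); [intros v [Hv _]; exact Hv|].
    exists z. split; [exact Hz | intros [_ Hzz]; exact (ord_irrefl Hzz)]. }
  enough (p <= p') by lia.
  apply (card_le_preimages (G0 := G0) (G1 := G1) K1 K'). intros u Hu.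
  destruct (proj1 (Himg u) (or_introl Hu)) as [v [Hv Hvu]].
  assert (Hvz : lt v z) by (apply (same_pos_reflect_lt Hvu Hzw), L1; assumption).
  exists v. split; [|exact Hvu]. destruct Hv as [Hv|Hv]; [split; assumption|].
  exfalso. exact (ord_asym Hvz (L0 z v Hz Hv)).
Qed.

Lemma pos_image_upper (G0 G1 x0 y0 x1 y1 : W -> Prop) q :
  seteq (union x1 y1) (pos_image G0 G1 (union x0 y0)) ->
  set_lt lt x0 y0 -> set_lt lt x1 y1 -> card_eq y0 q -> card_eq y1 q ->
  forall z w, y0 z -> same_pos lt G0 G1 z w -> y1 w.
Proof.
  intros Himg L0 L1 K0 K1 z w Hz Hzw.
  assert (Hw : union x1 y1 w) by (apply Himg; exists z; split; [right|]; assumption).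
  destruct Hw as [Hw|]; [exfalso|assumption].
  destruct (card_eq_restrict (fun v => lt z v) K0) as [q' K'].
  assert (q' < q).
  { apply (card_lt K' K0); [intros v [Hv _]; exact Hv|].
    exists z. split; [exact Hz | intros [_ Hzz]; exact (ord_irrefl Hzz)]. }
  enough (q <= q') by lia.
  apply (card_le_preimages (G0 := G0) (G1 := G1) K1 K'). intros u Hu.
  destruct (proj1 (Himg u) (or_intror Hu)) as [v [Hv Hvu]].
  assert (Hzv : lt z v) by (apply (same_pos_reflect_lt Hzw Hvu), L1; assumption).
  exists v. split; [|exact Hvu]. destruct Hv as [Hv|Hv]; [|split; assumption].
  exfalso. exact (ord_asym Hzv (L0 v z Hv Hz)).
Qed.

Lemma union_lt_inj (A : (W -> Prop) -> Prop) x y x' y' :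
  pairwise_disjoint A -> A x -> A x' ->
  (exists z, x z) -> (exists z, x' z) -> set_lt lt x y -> set_lt lt x' y' ->
  union x y = union x' y' -> x = x'.
Proof.
  intros Hdisj Ax Ax' [z Hz] [z' Hz'] Lxy Lx'y' E. apply NNPP. intro Hne.
  assert (Hzy' : y' z).
  { assert (Hu : union x' y' z) by (rewrite <- E; left; exact Hz).
    destruct Hu as [Hu|Hu]; [exfalso; exact (Hdisj x x' Ax Ax' Hne z (conj Hz Hu)) | exact Hu]. }
  assert (Hz'y : y z').
  { assert (Hu : union x y z') by (rewrite E; left; exact Hz').
    destruct Hu as [Hu|Hu]; [exfalso; exact (Hdisj x x' Ax Ax' Hne z' (conj Hu Hz')) | exact Hu]. }
  exact (ord_asym (Lxy z z' Hz Hz'y) (Lx'y' z' z Hz' Hzy')).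
Qed.

Section BinaryScheme.

Variables (m r : nat -> nat) (F : (W -> Prop) -> Prop).
Hypothesis HF : construction_scheme lt m two r F.

Local Notation decomp := (is_decomp lt m two r F).

Lemma decomp2 {k Fa G R} : decomp k Fa G R ->
  level F k (G 0) /\ level F k (G 1) /\ seteq Fa (union (G 0) (G 1)) /\
  seteq (inter (G 0) (G 1)) R /\ set_lt lt R (diff (G 0) R) /\
  set_lt lt (diff (G 0) R) (diff (G 1) R).
Proof.
  unfold two. intros [Hlev [Hunion [Hroot [_ [HR0 H01]]]]].
  split; [apply Hlev; lia|]. split; [apply Hlev; lia|].
  split.
  { intro x. rewrite (Hunion x). split.
    - intros [[|[|i]] [Hi Gx]]; [left | right | lia]; exact Gx.
    - intros [Gx|Gx]; [exists 0 | exists 1]; split; [lia | exact Gx | lia | exact Gx]. }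
  split; [apply (Hroot 0 1); lia|]. split; [exact HR0|]. apply (H01 0); lia.
Qed.

Section Halves.

Context {k : nat} {Fa : W -> Prop} {G : nat -> W -> Prop} {R : W -> Prop} {a : W}.
Hypotheses (HD : decomp k Fa G R) (Ha : G 0 a) (HaR : ~ R a).

Lemma root_init_low {e z} : G 0 e -> R z -> lt e z -> R e.
Proof.
  intros Ge Rz Hez. apply NNPP. intro Re.
  destruct (decomp2 HD) as [_ [_ [_ [_ [HR0 _]]]]].
  exact (ord_asym Hez (HR0 z e Rz (conj Ge Re))).
Qed.

Lemma low_lt_high {z w} : G 0 z -> G 1 w -> ~ R w -> lt z w.
Proof.
  intros Gz Gw Rw. destruct (decomp2 HD) as [_ [_ [_ [_ [HR0 H01]]]]].
  destruct (classic (R z)) as [Rz|Rz].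
  - apply (ord_trans (HR0 z a Rz (conj Ha HaR))). apply H01; split; assumption.
  - apply H01; split; assumption.
Qed.

Lemma low_init_seg : init_seg lt (G 0) Fa.
Proof.
  destruct (decomp2 HD) as [_ [_ [Hunion [Hroot _]]]].
  split; [intros x Gx; apply Hunion; left; exact Gx|].
  intros x y Fx Gy Hxy. apply Hunion in Fx. destruct Fx as [Gx|Gx]; [exact Gx|].
  apply NNPP. intro G0x. apply (ord_asym Hxy), low_lt_high; [exact Gy | exact Gx |].
  intro Rx. apply G0x, Hroot, Rx.
Qed.

Lemma low_half_sub_init_seg {b I} : G 1 b -> ~ R b -> init_seg lt I Fa -> I b -> subset (G 0) I.
Proof.
  intros Gb Rb [_ HI] Ib x Gx. apply (HI x b); [apply low_init_seg, Gx | exact Ib |].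
  exact (low_lt_high Gx Gb Rb).
Qed.

Lemma root_same_pos {z} : R z -> same_pos lt (G 0) (G 1) z z.
Proof.
  intro Rz. destruct (decomp2 HD) as [HG0 [_ [_ [Hroot _]]]].
  assert (HR : forall x, R x -> G 0 x /\ G 1 x) by (intros x Rx; exact (proj2 (Hroot x) Rx)).
  destruct HF as [_ [_ [Hcard _]]].
  destruct (card_eq_restrict (fun v => lt v z) (Hcard _ _ HG0)) as [p Hp].
  split; [apply HR, Rz|]. split; [apply HR, Rz|]. exists p. split; [exact Hp|].
  apply (card_eq_ext (A := fun v => G 0 v /\ lt v z)); [|exact Hp].
  intro v. split; intros [Gv Hvz]; split; try exact Hvz.
  - apply HR, (root_init_low Gv Rz Hvz).
  - assert (Rv : R v).
    { apply NNPP. intro Rv. apply (ord_asym Hvz), low_lt_high; [apply HR, Rz | exact Gv | exact Rv]. }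
    apply HR, Rv.
Qed.

Lemma pos_image_avoids_root {c} : (forall z, c z -> ~ R z) ->
  forall w, pos_image (G 0) (G 1) c w -> ~ R w.
Proof.
  intros Hc w [z [cz Hzw]] Rw.
  rewrite <- (same_pos_inj Hzw (root_same_pos Rw)) in Rw. exact (Hc z cz Rw).
Qed.

End Halves.

Definition copy_at (k : nat) (a b b' : W) : Prop :=
  exists Fa G R, level F (k + 1) Fa /\ decomp k Fa G R /\ G 0 a /\ ~ R a /\
    G 1 b /\ ~ R b /\ same_pos lt (G 0) (G 1) b' b.

Definition copy (a b b' : W) : Prop := exists k, copy_at k a b b'.

Lemma copy_lt {a b b'} : copy a b b' -> lt a b.
Proof.
  intros [k [Fa [G [R [_ [HD [Ha [HaR [Hb [HbR _]]]]]]]]]].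
  exact (low_lt_high HD Ha HaR Ha Hb HbR).
Qed.

Lemma copy_at_level_lt {k a b b' j E} : copy_at k a b b' -> level F j E -> E a -> E b -> k < j.
Proof.
  intros [Fa [G [R [_ [HD [Ha [HaR [Hb [HbR _]]]]]]]]] HE Ea Eb.
  destruct (decomp2 HD) as [_ [HG1 [_ [Hroot _]]]].
  (* At a level [j <= k], coherence of [E] with [G 1] would put [a] into [G 1], i.e. into [R]. *)
  destruct (le_lt_dec j k) as [Hjk|]; [exfalso|assumption].
  replace k with (j + (k - j)) in HG1 by lia.
  destruct (scheme_init_seg_inter HF (k - j) HE HG1) as [_ Hinit].
  destruct (Hinit a b Ea (conj Eb Hb) (low_lt_high HD Ha HaR Ha Hb HbR)) as [_ G1a].
  exact (HaR (proj1 (Hroot a) (conj Ha G1a))).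
Qed.

Lemma copy_at_level_eq {k1 k2 a b b1 b2} : copy_at k1 a b b1 -> copy_at k2 a b b2 -> k1 = k2.
Proof.
  assert (Hspan : forall k b', copy_at k a b b' -> exists E, level F (k + 1) E /\ E a /\ E b).
  { intros k b' [Fa [G [R [HFa [HD [Ha [_ [Hb _]]]]]]]].
    destruct (decomp2 HD) as [_ [_ [Hunion _]]].
    exists Fa. split; [exact HFa|]. split; apply Hunion; [left | right]; assumption. }
  intros H1 H2. destruct (Hspan _ _ H1) as [E1 [HE1 [E1a E1b]]].
  destruct (Hspan _ _ H2) as [E2 [HE2 [E2a E2b]]].
  pose proof (copy_at_level_lt H1 HE2 E2a E2b). pose proof (copy_at_level_lt H2 HE1 E1a E1b). lia.
Qed.

Lemma low_halves_eq {k a b Fa G R Fa' G' R'} :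
  level F (k + 1) Fa -> decomp k Fa G R -> G 0 a -> ~ R a -> G 1 b -> ~ R b ->
  level F (k + 1) Fa' -> decomp k Fa' G' R' -> G' 0 a -> ~ R' a -> G' 1 b -> ~ R' b ->
  seteq (G 0) (G' 0).
Proof.
  intros HFa HD Ha HaR Hb HbR HFa' HD' Ha' HaR' Hb' HbR'.
  destruct HF as [_ [_ [Hcard [Hcoh _]]]].
  destruct (Hcoh _ _ _ HFa HFa') as [HI HI'].
  destruct (decomp2 HD) as [HG0 [_ [Hunion _]]]. destruct (decomp2 HD') as [HG0' [_ [Hunion' _]]].
  assert (Ib : inter Fa Fa' b) by (split; [apply Hunion | apply Hunion']; right; assumption).
  pose proof (low_half_sub_init_seg HD Ha HaR Hb HbR HI Ib) as Hsub.
  pose proof (low_half_sub_init_seg HD' Ha' HaR' Hb' HbR' HI' Ib) as Hsub'.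
  pose proof (Hcard _ _ HG0) as K. pose proof (Hcard _ _ HG0') as K'.
  pose proof (low_init_seg HD Ha HaR) as Hinit. pose proof (low_init_seg HD' Ha' HaR') as Hinit'.
  intro x. split.
  - apply (init_seg_card_incl K K' Hinit Hinit');
      [intros y Hy; exact (proj2 (Hsub y Hy)) | intros y Hy; exact (proj1 (Hsub' y Hy))].
  - apply (init_seg_card_incl K' K Hinit' Hinit);
      [intros y Hy; exact (proj1 (Hsub' y Hy)) | intros y Hy; exact (proj2 (Hsub y Hy))].
Qed.

Lemma copy_at_unique {k a b b1 b2} : copy_at k a b b1 -> copy_at k a b b2 -> b1 = b2.
Proof.
  intros [Fa [G [R [HFa [HD [Ha [HaR [Hb [HbR Hs]]]]]]]]]
         [Fa' [G' [R' [HFa' [HD' [Ha' [HaR' [Hb' [HbR' Hs']]]]]]]]].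
  pose proof (low_halves_eq HFa HD Ha HaR Hb HbR HFa' HD' Ha' HaR' Hb' HbR') as Hlow.
  assert (Hhigh : seteq (fun z => G 1 z /\ lt z b) (fun z => G' 1 z /\ lt z b)).
  { destruct HF as [_ [_ [_ [Hcoh _]]]].
    destruct (decomp2 HD) as [_ [HG1 _]]. destruct (decomp2 HD') as [_ [HG1' _]].
    destruct (Hcoh _ _ _ HG1 HG1') as [[_ HI] [_ HI']].
    intro z. split; intros [Gz Hzb]; split; try exact Hzb.
    - exact (proj2 (HI z b Gz (conj Hb Hb') Hzb)).
    - exact (proj1 (HI' z b Gz (conj Hb Hb') Hzb)). }
  destruct Hs as [Gb1 [_ [p [Hb1 Hbp]]]]. destruct Hs' as [Gb2 [_ [p' [Hb2 Hbp']]]].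
  rewrite <- (card_eq_unique (card_eq_ext Hhigh Hbp) Hbp') in Hb2.
  apply (rank_inj Gb1 (proj2 (Hlow b2) Gb2) Hb1).
  apply (card_eq_ext (A := fun z => G' 0 z /\ lt z b2)); [|exact Hb2].
  intro z. rewrite (Hlow z). tauto.
Qed.

Lemma copy_unique {a b b1 b2} : copy a b b1 -> copy a b b2 -> b1 = b2.
Proof.
  intros [k1 H1] [k2 H2]. rewrite (copy_at_level_eq H1 H2) in H1. exact (copy_at_unique H1 H2).
Qed.

Inductive copy_depth (a : W) : W -> nat -> Prop :=
  | copy_depth_0 b b' : copy a b b' -> ~ lt a b' -> copy_depth a b 0
  | copy_depth_S b b' n : copy a b b' -> lt a b' -> copy_depth a b' n -> copy_depth a b (S n).

Lemma copy_depth_unique {a b n n'} : copy_depth a b n -> copy_depth a b n' -> n = n'.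
Proof.
  intro H. revert n'.
  induction H as [b b' Hc Hab' | b b' n Hc Hab' _ IH]; intros n' H';
    inversion H' as [? b'' Hc' Hab'' | ? b'' n'' Hc' Hab'' H'']; subst.
  - reflexivity.
  - rewrite (copy_unique Hc Hc') in Hab'. contradiction.
  - rewrite (copy_unique Hc Hc') in Hab'. contradiction.
  - rewrite (IH n''); [reflexivity|]. rewrite (copy_unique Hc Hc'). exact H''.
Qed.

(* Pairs admitting no chain of copies get the junk colour 0. *)
Definition coloring (a b : W) : nat := epsilon (inhabits 0) (copy_depth a b).

Lemma coloring_eq a b n : copy_depth a b n -> coloring a b = n.
Proof.
  intro H. eapply copy_depth_unique; [|exact H].
  unfold coloring. apply epsilon_spec. exists n. exact H.
Qed.

Definition twins (x0 y0 x1 y1 : W -> Prop) : Prop :=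
  forall a b, union x0 y0 a ->
    (x1 b -> exists b', x0 b' /\ copy a b b') /\ (y1 b -> exists b', y0 b' /\ copy a b b').

Lemma captured_twins {k Fa G R x0 y0 x1 y1 p q} :
  level F (k + 1) Fa -> decomp k Fa G R -> subset (union x0 y0) (G 0) ->
  (exists z, union x0 y0 z /\ ~ R z) ->
  seteq (union x1 y1) (pos_image (G 0) (G 1) (union x0 y0)) ->
  (exists z, x0 z) -> (forall z, ~ (x0 z /\ x1 z)) -> set_lt lt x0 y0 -> set_lt lt x1 y1 ->
  card_eq x0 p -> card_eq x1 p -> card_eq y0 q -> card_eq y1 q -> twins x0 y0 x1 y1.
Proof.
  intros HFa HD Hsub [a [Ha HaR]] Himg [e He] Hdisj L0 L1 Kx0 Kx1 Ky0 Ky1.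
  assert (Ga : G 0 a) by (apply Hsub, Ha).
  pose proof (pos_image_lower Himg L0 L1 Kx0 Kx1) as Hlow.
  pose proof (pos_image_upper Himg L0 L1 Ky0 Ky1) as Hup.
  assert (Hx0R : forall z, x0 z -> ~ R z).
  { intros z Hz Rz. apply (Hdisj z). split; [exact Hz|].
    exact (Hlow z z Hz (root_same_pos HD Ga HaR Rz)). }
  (* A point of [y0] in [R] would drag the point [e] of [x0] below it into [R]. *)
  assert (Hc0R : forall z, union x0 y0 z -> ~ R z).
  { intros z [Hz|Hz] Rz; [exact (Hx0R z Hz Rz)|].
    apply (Hx0R e He). apply (root_init_low HD (Hsub e (or_introl He)) Rz), L0; assumption. }
  pose proof (pos_image_avoids_root HD Ga HaR Hc0R) as Hc1R.
  intros a' b Ha'.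
  assert (Hpre : union x1 y1 b ->
    exists b', union x0 y0 b' /\ same_pos lt (G 0) (G 1) b' b /\ copy a' b b').
  { intro Hb. destruct (proj1 (Himg b) Hb) as [b' [Hb' Hs]].
    exists b'. split; [exact Hb'|]. split; [exact Hs|]. exists k, Fa, G, R.
    split; [exact HFa|]. split; [exact HD|]. split; [apply Hsub, Ha'|].
    split; [exact (Hc0R a' Ha')|]. split; [exact (proj1 (proj2 Hs))|].
    split; [apply Hc1R, Himg, Hb | exact Hs]. }
  split; intro Hb.
  - destruct (Hpre (or_introl Hb)) as [b' [[Hb'|Hb'] [Hs Hc]]]; [eauto|exfalso].
    exact (ord_irrefl (L1 b b Hb (Hup b' b Hb' Hs))).
  - destruct (Hpre (or_intror Hb)) as [b' [[Hb'|Hb'] [Hs Hc]]]; [exfalso|eauto].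
    exact (ord_irrefl (L1 b b (Hlow b' b Hb' Hs) Hb)).
Qed.

Hypothesis Hcap : n_capturing lt 2 m two r F.

Lemma lt_pair_exists A : (forall a, A a -> finite a) -> pairwise_disjoint A -> ~ countable_fam A ->
  exists x y, A x /\ A y /\ set_lt lt x y.
Proof.
  intros Hfin Hdisj Hunc.
  destruct (capture_pair Hcap Hfin Hunc)
    as [c0 [c1 [k [Fa [G [R [Ac0 [Ac1 [Hne [_ [HD [Hsub [[a [Ha HaR]] Himg]]]]]]]]]]]]].
  assert (Ga : G 0 a) by (apply Hsub, Ha).
  assert (H0R : forall z, c0 z -> ~ R z).
  { intros z Hz Rz. apply (Hdisj c0 c1 Ac0 Ac1 Hne z). split; [exact Hz|].
    apply Himg. exists z. split; [exact Hz | exact (root_same_pos HD Ga HaR Rz)]. }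
  exists c0, c1. split; [exact Ac0|]. split; [exact Ac1|].
  intros u v Hu Hv. destruct (proj1 (Himg v) Hv) as [v' [_ [_ [Gv _]]]].
  apply (low_lt_high HD Ga HaR (Hsub u Hu) Gv).
  exact (pos_image_avoids_root HD Ga HaR H0R (proj1 (Himg v) Hv)).
Qed.

Lemma twins_exist A P : disjoint_nonempty_finite A -> ~ countable_fam A -> pairs_dense A P ->
  exists x0 y0 x1 y1, A x0 /\ A y0 /\ A x1 /\ A y1 /\ set_lt lt x0 y0 /\ P x0 y0 /\
    twins x0 y0 x1 y1.
Proof.
  intros [Hfin [Hdisj Hne]] Hunc HP.
  set (X := fun x => A x /\ exists y, A y /\ set_lt lt x y /\ P x y).
  assert (HX : ~ countable_fam X).
  { intro HcX. apply Hunc, (countable_fam_split A X).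
    { apply (countable_fam_mono HcX). intros a [_ Ha]. exact Ha. }
    apply NNPP. intro Hc. destruct (HP _ (fun a Ha => proj1 Ha) Hc) as [x [y [[Ax HXx] [[Ay _] [Lxy Pxy]]]]].
    apply HXx. split; [exact Ax|]. exists y. split; [exact Ay|]. split; assumption. }
  set (f := fun x => epsilon (inhabits x) (fun y => A y /\ set_lt lt x y /\ P x y)).
  assert (Hf : forall x, X x -> A (f x) /\ set_lt lt x (f x) /\ P x (f x)).
  { intros x [_ Hx]. exact (epsilon_spec _ _ Hx). }
  destruct (uncountable_fiber (@card_of W) HX) as [p HXp].
  destruct (uncountable_fiber (fun x => card_of (f x)) HXp) as [q HXpq].
  set (X2 := fun x => (X x /\ card_of x = p) /\ card_of (f x) = q) in HXpq.
  set (S := fun c => exists x, X2 x /\ c = union x (f x)).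
  assert (HS : ~ countable_fam S).
  { intro HcS. apply HXpq, (countable_fam_inj_image X2 (fun x => union x (f x))); [|exact HcS].
    intros x x' [[Hx _] _] [[Hx' _] _]. destruct (Hf x Hx) as [_ [Lx _]]. destruct (Hf x' Hx') as [_ [Lx' _]].
    exact (union_lt_inj Hdisj (proj1 Hx) (proj1 Hx') (Hne x (proj1 Hx)) (Hne x' (proj1 Hx')) Lx Lx'). }
  assert (HSfin : forall c, S c -> finite c).
  { intros c [x [[[Hx _] _] ->]]. apply finite_union; apply Hfin; [exact (proj1 Hx) | apply Hf, Hx]. }
  destruct (capture_pair Hcap HSfin HS) as [c0 [c1 [k [Fa [G [R
    [[x0 [[[Hx0 Hp0] Hq0] ->]] [[x1 [[[Hx1 Hp1] Hq1] ->]] [Hne01 [HFa [HD [Hsub [Hout Himg]]]]]]]]]]]]].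
  assert (Hx01 : x0 <> x1) by (intros ->; exact (Hne01 eq_refl)).
  destruct (Hf x0 Hx0) as [Ay0 [L0 P0]]. destruct (Hf x1 Hx1) as [Ay1 [L1 _]].
  pose proof (proj1 Hx0) as Ax0. pose proof (proj1 Hx1) as Ax1.
  exists x0, (f x0), x1, (f x1). repeat (split; [assumption|]).
  assert (HK : forall x n, A x -> card_of x = n -> card_eq x n)
    by (intros x n Ax <-; apply card_of_spec, Hfin, Ax).
  exact (captured_twins HFa HD Hsub Hout Himg (Hne x0 Ax0) (Hdisj x0 x1 Ax0 Ax1 Hx01) L0 L1
    (HK _ _ Ax0 Hp0) (HK _ _ Ax1 Hp1) (HK _ _ Ay0 Hq0) (HK _ _ Ay1 Hq1)).
Qed.

Lemma depth_pairs_dense n A : disjoint_nonempty_finite A ->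
  pairs_dense A (fun x y => forall u v, x u -> y v -> copy_depth u v n).
Proof.
  revert A. induction n as [|n IH]; intros A HA A' HA'A HA'unc;
    pose proof (disjoint_nonempty_finite_sub HA HA'A) as HA'.
  - destruct (twins_exist (P := fun _ _ => True) HA' HA'unc)
      as [x0 [y0 [x1 [y1 [_ [Ay0 [Ax1 [_ [L0 [_ Htw]]]]]]]]]].
    { intros A'' HA''A' HA''unc. destruct (disjoint_nonempty_finite_sub HA' HA''A') as [Hfin [Hdisj _]].
      destruct (lt_pair_exists Hfin Hdisj HA''unc) as [x [y [Ax [Ay Lxy]]]].
      exists x, y. repeat split; assumption. }
    assert (Hcopy : forall u v, y0 u -> x1 v -> exists b', x0 b' /\ copy u v b')
      by (intros u v Hu Hv; exact (proj1 (Htw u v (or_intror Hu)) Hv)).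
    exists y0, x1. split; [exact Ay0|]. split; [exact Ax1|]. split.
    + intros u v Hu Hv. destruct (Hcopy u v Hu Hv) as [b' [_ Hc]]. exact (copy_lt Hc).
    + intros u v Hu Hv. destruct (Hcopy u v Hu Hv) as [b' [Hb' Hc]].
      apply (copy_depth_0 Hc). exact (ord_asym (L0 b' u Hb' Hu)).
  - destruct (twins_exist HA' HA'unc (IH A' HA')) as [x0 [y0 [x1 [y1 [Ax0 [_ [_ [Ay1 [L0 [P0 Htw]]]]]]]]]].
    assert (Hcopy : forall u v, x0 u -> y1 v -> exists b', y0 b' /\ copy u v b')
      by (intros u v Hu Hv; exact (proj2 (Htw u v (or_introl Hu)) Hv)).
    exists x0, y1. split; [exact Ax0|]. split; [exact Ay1|]. split.
    + intros u v Hu Hv. destruct (Hcopy u v Hu Hv) as [b' [_ Hc]]. exact (copy_lt Hc).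
    + intros u v Hu Hv. destruct (Hcopy u v Hu Hv) as [b' [Hb' Hc]].
      exact (copy_depth_S Hc (L0 u b' Hu Hb') (P0 u b' Hu Hb')).
Qed.

Lemma coloring_homogeneous_pair A : (forall a, A a -> finite a) -> pairwise_disjoint A ->
  ~ countable_fam A -> forall n, exists a b, A a /\ A b /\ set_lt lt a b /\
    (forall x y, a x -> b y -> coloring x y = n).
Proof.
  intros Hfin Hdisj Hunc n.
  destruct (classic (exists a, A a /\ forall z, ~ a z)) as [[a [Aa Ha]]|Hne].
  - exists a, a. split; [exact Aa|]. split; [exact Aa|].
    split; intros x y Hx; contradiction (Ha x Hx).
  - assert (HA : disjoint_nonempty_finite A).
    { split; [exact Hfin|]. split; [exact Hdisj|].
      intros a Aa. apply NNPP. intro Ha. apply Hne. exists a. split; [exact Aa|].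
      intros z Hz. exact (Ha (ex_intro _ z Hz)). }
    destruct (depth_pairs_dense n HA (fun a Ha => Ha) Hunc) as [a [b [Aa [Ab [Lab Hab]]]]].
    exists a, b. split; [exact Aa|]. split; [exact Ab|]. split; [exact Lab|].
    intros x y Hx Hy. apply coloring_eq, Hab; assumption.
Qed.

End BinaryScheme.
End LinearOrder.

(* [r_(j+1) = j - s^2] for [s = floor (sqrt j)] runs through [0, ..., 2s] while [j] runs from
   [s^2] to [(s+1)^2 - 1], so every value is taken infinitely often. *)
Definition type_r (k : nat) : nat :=
  match k with 0 => 0 | S j => j - Nat.sqrt j * Nat.sqrt j end.

Fixpoint type_m (k : nat) : nat :=
  match k with 0 => 1 | S j => type_r (S j) + (type_m j - type_r (S j)) * 2 end.

Lemma type_r_le k : type_r (S k) <= k.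
Proof. simpl. lia. Qed.

Lemma type_m_gt k : k < type_m k.
Proof. induction k as [|k IH]; simpl; [lia|]. pose proof (type_r_le k). simpl in H. lia. Qed.

Lemma is_type_binary : is_type type_m two type_r.
Proof.
  split; [reflexivity|]. split; [unfold two; lia|]. split; [|split].
  - intros j N. set (s := j + N + 1). exists (S (s * s + j)). split; [nia|].
    simpl. rewrite (Nat.sqrt_unique (s * s + j) s); [lia | nia].
  - intro k. rewrite Nat.add_1_r. pose proof (type_r_le k). pose proof (type_m_gt k). lia.
  - intro k. rewrite Nat.add_1_r. reflexivity.
Qed.

Theorem mainTheorem9 (W : Type) (lt : W -> W -> Prop)
  (Homega1 : is_omega1 lt) (HCA2 : CA lt 2) :
  exists o : W -> W -> nat,
    forall A : (W -> Prop) -> Prop,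
      (forall a, A a -> finite a) ->
      (forall a b, A a -> A b -> a <> b -> forall x, ~ (a x /\ b x)) ->
      ~ countable_fam A ->
      forall k : nat, exists a b, A a /\ A b /\ set_lt lt a b /\
        (forall x y, a x -> b y -> o x y = k).
Proof.
  destruct Homega1 as [Hirr [Htrans [Htot _]]].
  destruct (HCA2 type_m two type_r is_type_binary (fun _ _ => le_n 2)) as [F [HF Hcap]].
  exists (coloring lt type_m type_r F).
  exact (coloring_homogeneous_pair (conj Hirr (conj Htrans Htot)) HF Hcap).
Qed.
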